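(* Let $y_0:A\to\Delta(B)$ satisfy $U^1(\mu_0,y_0)>U^1(\mu,y_0)$ for every $\mu\in\mathcal{M}\setminus\{\mu_0\}$ and $U^2(\mu_0,y_0)>v^2$; let $\bar y:A\to\Delta(B)$ satisfy $U^1(\mu_0,\bar y)\ge U^1(\mu,\bar y)$ for all $\mu\in\mathcal{M}$ and $U^2(\mu_0,\bar y)\ge v^2$; let $\varepsilon\in(0,1]$ and $y=\varepsilon y_0+(1-\varepsilon)\bar y$. Assume $\mathcal{M}$ has at least one extreme point different from $\mu_0$, and let $\mathcal{M}_e$ be the set of extreme points of $\mathcal{M}$, $c_1=\min_{\mu_e\in\mathcal{M}_e,\mu_e\neq\mu_0}\big(U^1(\mu_0,y_0)-U^1(\mu_e,y_0)\big)$ and $c_2=\max_{\mu_e\in\mathcal{M}_e,\mu_e\ne\mu_0}\|\mu_e-\mu_0\|_1$. Then for every $\mu\in\mathcal{M}$, $U^1(\mu_0,y)-U^1(\mu,y)\ge\frac{\varepsilon c_1}{c_2}\|\mu-\mu_0\|_1$.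
   Context: $S$ is finite, $A=S$, $B$ finite, $u=(u^1,u^2):S\times B\to\mathbb{R}^2$ extended linearly to mixed actions. $m\in\Delta(S)$ has full support. $\mathcal{M}\subset\Delta(S\times A)$ is the (polytope) set of distributions on $S\times A$ both of whose marginals equal $m$; $\mu_0(s,s)=m(s)$, $\mu_0(s,a)=0$ for $s\ne a$. For $\mu\in\mathcal{M}$ and $y:A\to\Delta(B)$, $U(\mu,y)=\sum_{s,a}\mu(s,a)u(s,y(\cdot\mid a))$; $v^2=\max_{b\in B}\sum_s m(s)u^2(s,b)$. *)

From mathcomp Require Import all_boot all_order all_algebra.
Set Implicit Arguments. Unset Strict Implicit. Unset Printing Implicit Defensive.
Import Order.TTheory GRing.Theory Num.Theory.
Local Open Scope ring_scope.

Section Defs.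
Variables (R : realFieldType) (S B : finType).

(* A = S.  A distribution on S x A is a function S -> S -> R. *)
Definition is_dist2 (mu : S -> S -> R) : Prop :=
  (forall s a, 0 <= mu s a) /\ \sum_(s : S) \sum_(a : S) mu s a = 1.

Definition inM (m : S -> R) (mu : S -> S -> R) : Prop :=
  is_dist2 mu /\
  (forall s, \sum_(a : S) mu s a = m s) /\
  (forall a, \sum_(s : S) mu s a = m a).

Definition mu0 (m : S -> R) : S -> S -> R :=
  fun s a => if s == a then m s else 0.

Definition is_strategy (y : S -> B -> R) : Prop :=
  forall a, (forall b, 0 <= y a b) /\ \sum_(b : B) y a b = 1.

Definition umix (ui : S -> B -> R) (s : S) (y : S -> B -> R) (a : S) : R :=
  \sum_(b : B) y a b * ui s b.

Definition U (ui : S -> B -> R) (mu : S -> S -> R) (y : S -> B -> R) : R :=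
  \sum_(s : S) \sum_(a : S) mu s a * umix ui s y a.

Definition l1dist (mu nu : S -> S -> R) : R :=
  \sum_(s : S) \sum_(a : S) `|mu s a - nu s a|.

Definition extreme_M (m : S -> R) (mu : S -> S -> R) : Prop :=
  inM m mu /\
  forall nu1 nu2 : S -> S -> R, forall t : R,
    inM m nu1 -> inM m nu2 -> 0 < t < 1 ->
    mu = (fun s a => t * nu1 s a + (1 - t) * nu2 s a) -> nu1 = nu2.

Definition is_v2 (m : S -> R) (u2 : S -> B -> R) (v : R) : Prop :=
  (exists b, v = \sum_(s : S) m s * u2 s b) /\
  (forall b, \sum_(s : S) m s * u2 s b <= v).

End Defs.

From mathcomp Require Import all_boot all_order all_algebra.
From mathcomp Require Import ring lra.
From Stdlib Require Import Classical FunctionalExtensionality.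
Set Implicit Arguments.
Unset Strict Implicit.
Unset Printing Implicit Defensive.
Import Order.TTheory GRing.Theory Num.Theory.
Local Open Scope ring_scope.

(* The gap U^1(mu0,y0) - U^1(mu,y0) is affine in mu and ||mu - mu0||_1 is
   convex, so the gap minus (c1/c2) ||mu - mu0||_1 is concave on M.  A concave
   function on the polytope M is nonnegative as soon as it is nonnegative at
   the extreme points, and there this is the definition of c1 and c2.  Mixing
   in ybar only adds the nonnegative term (1-eps)(U^1(mu0,ybar) - U^1(mu,ybar)).
   The reduction to extreme points is by induction on the size of the support:
   a non-extreme point of M lies inside a segment in M whose two endpoints have
   strictly smaller support. *)

Lemma sum_eq0_exists_gt0 (R : realDomainType) (I : finType) (F : I -> R) :
  \sum_i F i = 0 -> (exists i, F i != 0) -> exists i, 0 < F i.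
Proof.
move=> F0 [i Fi_neq0].
case: (pickP (fun j => 0 < F j)) => [j Fj_gt0|no_pos]; first by exists j.
have NF_ge0 j : 0 <= - F j by rewrite oppr_ge0 leNgt no_pos.
have NF0 : \sum_j - F j = 0 by rewrite sumrN F0 oppr0.
move: Fi_neq0; rewrite -oppr_eq0.
by rewrite (psumr_eq0P (P := xpredT) (F := fun j => - F j)) ?eqxx.
Qed.

Section Polytope.
Variables (R : realFieldType) (S : finType) (m : S -> R).
Implicit Types (mu nu p q d : S -> S -> R) (t c : R).

Definition mix t p q : S -> S -> R := fun s a => t * p s a + (1 - t) * q s a.

Definition supp mu : {set S * S} := [set x | mu x.1 x.2 != 0].

Definition shift mu c d : S -> S -> R := fun s a => mu s a - c * d s a.

Definition zero_margins d : Prop :=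
  (forall s, \sum_a d s a = 0) /\ (forall a, \sum_s d s a = 0).

Lemma zero_margins_inM_sub nu1 nu2 :
  inM m nu1 -> inM m nu2 -> zero_margins (fun s a => nu1 s a - nu2 s a).
Proof.
move=> [_ [r1 c1]] [_ [r2 c2]].
by split=> x; rewrite sumrB ?(r1, r2) ?(c1, c2) subrr.
Qed.

Lemma zero_marginsN d : zero_margins d -> zero_margins (fun s a => - d s a).
Proof. by case=> dr dc; split=> x; rewrite sumrN ?(dr, dc) oppr0. Qed.

Lemma zero_margins_total d : zero_margins d -> \sum_(x : S * S) d x.1 x.2 = 0.
Proof. by case=> dr _; rewrite -(pair_big xpredT xpredT d) big1. Qed.

Lemma inM_shift mu d c :
  inM m mu -> zero_margins d -> (forall s a, 0 <= shift mu c d s a) ->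
  inM m (shift mu c d).
Proof.
move=> [[_ mu1] [mur muc]] [dr dc] ge0.
have row s : \sum_a (mu s a - c * d s a) = m s.
  by rewrite sumrB -mulr_sumr dr mulr0 subr0 mur.
split; last by split=> // a; rewrite sumrB -mulr_sumr dc mulr0 subr0 muc.
by split=> //; rewrite -mu1; apply: eq_bigr => s _; rewrite row mur.
Qed.

Lemma mix_eq0 t nu1 nu2 s a :
  0 < t < 1 -> 0 <= nu1 s a -> 0 <= nu2 s a -> mix t nu1 nu2 s a = 0 ->
  nu1 s a = 0 /\ nu2 s a = 0.
Proof.
rewrite /mix => /andP[t_gt0 t_lt1] nu1_ge0 nu2_ge0 /eqP.
have t_nu1_ge0 : 0 <= t * nu1 s a by rewrite mulr_ge0 // ltW.
have t_nu2_ge0 : 0 <= (1 - t) * nu2 s a by rewrite mulr_ge0 // subr_ge0 ltW.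
rewrite (paddr_eq0 t_nu1_ge0 t_nu2_ge0) !mulf_eq0.
rewrite (gt_eqF t_gt0) subr_eq0 (gt_eqF t_lt1) /=.
by case/andP=> /eqP-> /eqP->.
Qed.

(* Walking from [mu] along [-d] as far as nonnegativity allows preserves the
   margins and leaves the support of [mu] through one of its coordinates. *)
Lemma exists_shift_supp_lt mu d :
  inM m mu -> zero_margins d -> (forall s a, mu s a = 0 -> d s a = 0) ->
  (exists x : S * S, 0 < d x.1 x.2) ->
  exists2 c : R, 0 < c & inM m (shift mu c d) /\
    (#|supp (shift mu c d)| < #|supp mu|)%N.
Proof.
move=> hmu hd dsupp [x0 dx0_gt0].
have mu_ge0 := hmu.1.1.
have mu_gt0 x : 0 < d x.1 x.2 -> 0 < mu x.1 x.2.
  move=> dx_gt0; rewrite lt_def mu_ge0 andbT; apply/eqP => mux0.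
  by move: dx_gt0; rewrite dsupp // ltxx.
case: (@arg_minP _ _ _ x0 (fun x => 0 < d x.1 x.2)
         (fun x => mu x.1 x.2 / d x.1 x.2) dx0_gt0) => xs dxs_gt0 xs_min.
set c := mu xs.1 xs.2 / d xs.1 xs.2.
have c_gt0 : 0 < c by rewrite divr_gt0 ?mu_gt0.
have shift_ge0 s a : 0 <= mu s a - c * d s a.
  rewrite subr_ge0; case: (ltP 0 (d s a)) => [d_gt0|d_le0].
    by rewrite -ler_pdivlMr // (xs_min (s, a)).
  by apply: le_trans (mu_ge0 s a); rewrite pmulr_rle0.
exists c => //; split; first exact: inM_shift.
apply: proper_card; apply/properP; split.
  apply/subsetP => x; rewrite !inE /shift; apply: contraNN => /eqP mux0.
  by rewrite mux0 dsupp // mulr0 subr0.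
exists xs; rewrite !inE /shift ?(gt_eqF (mu_gt0 _ dxs_gt0)) //.
by rewrite /c divfK ?subrr ?eqxx // gt_eqF.
Qed.

Lemma not_extreme_split mu :
  inM m mu -> ~ extreme_M m mu ->
  exists p q t, [/\ inM m p, inM m q, 0 <= t <= 1, mu = mix t p q &
    (#|supp p| < #|supp mu|)%N /\ (#|supp q| < #|supp mu|)%N].
Proof.
move=> hmu not_ext.
have [nu1 [nu2 [t [h1 h2 ht emu nu12]]]] : exists nu1 nu2 t,
    [/\ inM m nu1, inM m nu2, 0 < t < 1, mu = mix t nu1 nu2 & nu1 <> nu2].
  apply: NNPP => none; apply: not_ext; split=> // nu1 nu2 t h1 h2 ht emu.
  by apply: NNPP => nu12; apply: none; exists nu1, nu2, t.
pose d s a := nu1 s a - nu2 s a.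
have hd : zero_margins d := zero_margins_inM_sub h1 h2.
have dsupp s a : mu s a = 0 -> d s a = 0.
  rewrite emu /d => /(mix_eq0 ht (h1.1.1 s a) (h2.1.1 s a)) [-> ->].
  exact: subrr.
have [x dx_neq0] : exists x : S * S, d x.1 x.2 != 0.
  apply: NNPP => d0; apply: nu12.
  apply: functional_extensionality => s; apply: functional_extensionality => a.
  apply/eqP; rewrite -subr_eq0; apply/negPn/negP => nu12sa.
  by apply: d0; exists (s, a).
have [xp dxp_gt0] :=
  sum_eq0_exists_gt0 (zero_margins_total hd) (ex_intro _ x dx_neq0).
have Ndx_neq0 : - d x.1 x.2 != 0 by rewrite oppr_eq0.
have [xn dxn_gt0] := sum_eq0_exists_gt0 (zero_margins_total (zero_marginsN hd))
  (ex_intro (fun x => - d x.1 x.2 != 0) x Ndx_neq0).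
have [cp cp_gt0 [hp supp_p]] :=
  exists_shift_supp_lt hmu hd dsupp (ex_intro _ xp dxp_gt0).
have Ndsupp s a : mu s a = 0 -> - d s a = 0 by move/dsupp->; rewrite oppr0.
have [cn cn_gt0 [hq supp_q]] :=
  exists_shift_supp_lt hmu (zero_marginsN hd) Ndsupp (ex_intro _ xn dxn_gt0).
have cpn_gt0 : 0 < cp + cn by rewrite addr_gt0.
exists (shift mu cp d), (shift mu cn (fun s a => - d s a)), (cn / (cp + cn)).
split=> //.
  rewrite divr_ge0 ?(ltW cn_gt0) ?(ltW cpn_gt0) //=.
  by rewrite ler_pdivrMr // mul1r lerDr ltW.
apply: functional_extensionality => s; apply: functional_extensionality => a.
by rewrite /mix /shift; field; rewrite gt_eqF.
Qed.

Lemma concave_ge0_on_M (F : (S -> S -> R) -> R) :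
  (forall p q t, inM m p -> inM m q -> 0 <= t <= 1 ->
     t * F p + (1 - t) * F q <= F (mix t p q)) ->
  (forall mu, extreme_M m mu -> 0 <= F mu) ->
  forall mu, inM m mu -> 0 <= F mu.
Proof.
move=> F_concave F_ext.
suff F_ge0 n mu : inM m mu -> (#|supp mu| < n)%N -> 0 <= F mu.
  by move=> mu hmu; apply: (F_ge0 _ mu hmu (ltnSn _)).
elim: n mu => [//|n IHn] mu hmu supp_lt.
have [ext|not_ext] := classic (extreme_M m mu); first exact: F_ext.
have [p [q [t [hp hq /[dup] t01 /andP[t_ge0 t_le1] emu [supp_p supp_q]]]]] :=
  not_extreme_split hmu not_ext.
rewrite emu; apply: le_trans (F_concave _ _ _ hp hq t01).
have Fp_ge0 := IHn p hp (leq_trans supp_p (ltnSE supp_lt)).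
have Fq_ge0 := IHn q hq (leq_trans supp_q (ltnSE supp_lt)).
by rewrite addr_ge0 // mulr_ge0 // subr_ge0.
Qed.

Lemma U_mixl (B : finType) (ui : S -> B -> R) t p q y :
  U ui (mix t p q) y = t * U ui p y + (1 - t) * U ui q y.
Proof.
rewrite /U !mulr_sumr -big_split; apply: eq_bigr => s _.
rewrite !mulr_sumr -big_split; apply: eq_bigr => a _.
by rewrite /mix /=; ring.
Qed.

Lemma U_mixr (B : finType) (ui : S -> B -> R) mu t (y1 y2 : S -> B -> R) :
  U ui mu (fun a b => t * y1 a b + (1 - t) * y2 a b) =
  t * U ui mu y1 + (1 - t) * U ui mu y2.
Proof.
rewrite /U !mulr_sumr -big_split; apply: eq_bigr => s _.
rewrite !mulr_sumr -big_split; apply: eq_bigr => a _.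
rewrite /umix /=.
suff -> : \sum_b (t * y1 a b + (1 - t) * y2 a b) * ui s b =
          t * \sum_b y1 a b * ui s b + (1 - t) * \sum_b y2 a b * ui s b by ring.
by rewrite !mulr_sumr -big_split; apply: eq_bigr => b _ /=; ring.
Qed.

Lemma l1dist_ge0 mu nu : 0 <= l1dist mu nu.
Proof. by apply: sumr_ge0 => s _; apply: sumr_ge0 => a _. Qed.

Lemma l1distxx mu : l1dist mu mu = 0.
Proof.
by rewrite /l1dist big1 // => s _; rewrite big1 // => a _; rewrite subrr normr0.
Qed.

Lemma l1dist_mixl t p q nu : 0 <= t <= 1 ->
  l1dist (mix t p q) nu <= t * l1dist p nu + (1 - t) * l1dist q nu.
Proof.
case/andP=> t_ge0 t_le1; have t'_ge0 : 0 <= 1 - t by rewrite subr_ge0.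
rewrite /l1dist !mulr_sumr -big_split; apply: ler_sum => s _.
rewrite !mulr_sumr -big_split; apply: ler_sum => a _.
have -> : mix t p q s a - nu s a =
          t * (p s a - nu s a) + (1 - t) * (q s a - nu s a).
  by rewrite /mix; ring.
apply: le_trans (ler_normD _ _) _.
by rewrite /= !normrM (ger0_norm t_ge0) (ger0_norm t'_ge0).
Qed.

Lemma U_gap_ge_l1dist (B : finType) (ui : S -> B -> R) y nu0 k : 0 <= k ->
  (forall mue, extreme_M m mue -> k * l1dist mue nu0 <= U ui nu0 y - U ui mue y) ->
  forall mu, inM m mu -> k * l1dist mu nu0 <= U ui nu0 y - U ui mu y.
Proof.
move=> k_ge0 ext_ge mu hmu; rewrite -subr_ge0.
pose F nu := U ui nu0 y - U ui nu y - k * l1dist nu nu0.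
apply: (concave_ge0_on_M (F := F)) => // [p q t _ _ t01|nu /ext_ge];
  last by rewrite subr_ge0.
have := ler_wpM2l k_ge0 (l1dist_mixl p q nu0 t01).
rewrite /F U_mixl; lra.
Qed.

End Polytope.

Theorem lemma3 (R : realFieldType) (S B : finType)
  (u1 u2 : S -> B -> R) (m : S -> R)
  (hm_pos : forall s, 0 < m s) (hm_sum : \sum_(s : S) m s = 1)
  (v2 : R) (hv2 : is_v2 m u2 v2)
  (y0 ybar : S -> B -> R)
  (hy0 : is_strategy y0) (hybar : is_strategy ybar)
  (hy0_1 : forall mu, inM m mu -> mu <> mu0 m ->
             U u1 (mu0 m) y0 > U u1 mu y0)
  (hy0_2 : U u2 (mu0 m) y0 > v2)
  (hybar_1 : forall mu, inM m mu -> U u1 (mu0 m) ybar >= U u1 mu ybar)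
  (hybar_2 : U u2 (mu0 m) ybar >= v2)
  (eps : R) (heps : 0 < eps <= 1)
  (hext : exists mue, extreme_M m mue /\ mue <> mu0 m)
  (c1 c2 : R)
  (hc1 : (exists mue, [/\ extreme_M m mue, mue <> mu0 m &
            c1 = U u1 (mu0 m) y0 - U u1 mue y0]) /\
         (forall mue, extreme_M m mue -> mue <> mu0 m ->
            c1 <= U u1 (mu0 m) y0 - U u1 mue y0))
  (hc2 : (exists mue, [/\ extreme_M m mue, mue <> mu0 m &
            c2 = l1dist mue (mu0 m)]) /\
         (forall mue, extreme_M m mue -> mue <> mu0 m ->
            l1dist mue (mu0 m) <= c2)) :
  let y := fun a b => eps * y0 a b + (1 - eps) * ybar a b in
  forall mu, inM m mu ->
    U u1 (mu0 m) y - U u1 mu y >= eps * c1 / c2 * l1dist mu (mu0 m).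
Proof.
move=> y mu hmu; case: hc1 hc2 => [[mue1 [ext1 ne1 c1E]] c1_le] [_ c2_ge].
have c1_ge0 : 0 <= c1 by rewrite c1E subr_ge0 ltW // hy0_1 //; case: ext1.
have c2_ge0 : 0 <= c2.
  by case: hext => mue [ext ne]; exact: le_trans (l1dist_ge0 _ _) (c2_ge _ ext ne).
pose k := c1 / c2.
have k_ge0 : 0 <= k by rewrite divr_ge0.
have kc2_le : k * c2 <= c1.
  by have [->|c2_neq0] := eqVneq c2 0; rewrite ?mulr0 // divfK.
have gap_y0 : k * l1dist mu (mu0 m) <= U u1 (mu0 m) y0 - U u1 mu y0.
  apply: (U_gap_ge_l1dist k_ge0 _ hmu) => mue ext.
  have [->|ne] := classic (mue = mu0 m); first by rewrite l1distxx mulr0 subrr.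
  apply: le_trans (c1_le _ ext ne); apply: le_trans kc2_le.
  by rewrite ler_wpM2l // c2_ge.
have gap_ybar := hybar_1 mu hmu.
case/andP: heps => eps_gt0 eps_le1.
have := ler_wpM2l (ltW eps_gt0) gap_y0.
have : 0 <= (1 - eps) * (U u1 (mu0 m) ybar - U u1 mu ybar).
  by rewrite mulr_ge0 // subr_ge0.
have -> : eps * c1 / c2 * l1dist mu (mu0 m) = eps * (k * l1dist mu (mu0 m)).
  by rewrite /k !mulrA.
rewrite /y !U_mixr; lra.
Qed.
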